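(* Let $x,y\in R=\mathbb{K}[[t]]$ with $v(x)=5$, $v(y)=8$, chosen so that $t=y^2/x^3$, and put $z=y/x$. Let $S_2=\langle 1,x,y,x^2,tx^2\rangle+t^{13}R$. For $\alpha,\beta\in\mathbb{K}$ with $\alpha\neq 0$ let $F_9(\alpha,\beta)=\langle 1,\ z+\alpha t z^2+\beta z^3,\ x,\ y\rangle + t^{10}R$. Then each $F_9(\alpha,\beta)$ is an $S_2$-submodule of $R$, and $F_9(\alpha,\beta)\cong F_9(\alpha',\beta')$ as $S_2$-modules (with $\alpha,\alpha'\ne0$) only if $(\alpha,\beta)=(\alpha',\beta')$.
   Context: $\mathbb{K}$ is an algebraically closed field; $v$ denotes the $t$-adic valuation on $R=\mathbb{K}[[t]]$; $\langle a_1,\dots,a_m\rangle$ denotes the $\mathbb{K}$-linear span of $a_1,\dots,a_m$. *)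

From HB Require Import structures.
From mathcomp Require Import all_boot all_order all_algebra.
Set Implicit Arguments. Unset Strict Implicit. Unset Printing Implicit Defensive.
Import GRing.Theory.
Local Open Scope ring_scope.

(* An element of K[[t]]: f n is the coefficient of t^n. *)
Definition pser (K : Type) := nat -> K.

Section PSer.
Variable K : fieldType.

Definition pzero : pser K := fun _ => 0.
Definition padd (f g : pser K) : pser K := fun n => f n + g n.
Definition pscale (c : K) (f : pser K) : pser K := fun n => c * f n.
Definition pmul (f g : pser K) : pser K :=
  fun n => \sum_(i < n.+1) f i * g (n - i)%N.
Definition pconst (c : K) : pser K := fun n => if n == 0%N then c else 0.
Definition ptpow (k : nat) : pser K := fun n => if n == k then 1 else 0.
Definition pt : pser K := ptpow 1.

Definition val_eq (f : pser K) (k : nat) : Prop :=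
  (forall i, (i < k)%N -> f i = 0) /\ f k != 0.

Definition lincomb (cs : seq K) (gens : seq (pser K)) : pser K :=
  foldr (fun p acc => padd (pscale p.1 p.2) acc) pzero (zip cs gens).

Definition span_plus (gens : seq (pser K)) (n : nat) (f : pser K) : Prop :=
  exists cs : seq K, size cs = size gens /\
    exists r : pser K, f = padd (lincomb cs gens) (pmul (ptpow n) r).

Definition is_submodule (S F : pser K -> Prop) : Prop :=
  F pzero /\
  (forall a b, F a -> F b -> F (padd a b)) /\
  (forall s m, S s -> F m -> F (pmul s m)).

Definition module_iso (S F F' : pser K -> Prop) : Prop :=
  exists phi : pser K -> pser K,
    (forall m, F m -> F' (phi m)) /\
    (forall a b, F a -> F b -> phi (padd a b) = padd (phi a) (phi b)) /\
    (forall s m, S s -> F m -> phi (pmul s m) = pmul s (phi m)) /\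
    (forall a b, F a -> F b -> phi a = phi b -> a = b) /\
    (forall m', F' m' -> exists m, F m /\ phi m = m').

Definition S2 (x y : pser K) : pser K -> Prop :=
  span_plus [:: pconst 1; x; y; pmul x x; pmul pt (pmul x x)] 13.

Definition F9 (x y z : pser K) (a b : K) : pser K -> Prop :=
  span_plus [:: pconst 1;
                padd z (padd (pscale a (pmul pt (pmul z z)))
                             (pscale b (pmul z (pmul z z))));
                x; y] 10.
End PSer.

(* For the curve: v(z) = 3 and z^2 = t x, so the generator z + a t z^2 + b z^3
   of F_9(a,b) is w(a,b) = z + a t^2 x + b t y.  Modulo t^10 one has x w = y,
   w w' = t x, and the other products of x, y, w vanish; this makes F_9 an
   S_2-module.  An isomorphism F_9(a,b) -> F_9(a',b') is multiplication by
   some u = c0 + c1 w' + c2 x + c3 y with c0 = u(0) <> 0, and w u, congruent to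
   c0 w + c1 t x + c2 y, lies in F_9(a',b'); comparing the coefficients of
   1, z, x, t x, t^2 x, y, t y (orders 0, 3, 5, 6, 7, 8, 9) gives (a,b) = (a',b'). *)

From HB Require Import structures.
From mathcomp Require Import all_boot all_order all_algebra.
From mathcomp Require Import ring zify.
From Stdlib Require Import FunctionalExtensionality.
Set Implicit Arguments. Unset Strict Implicit. Unset Printing Implicit Defensive.
Import GRing.Theory.
Local Open Scope ring_scope.

Section PowerSeries.
Variable K : fieldType.
Implicit Types (f g h : pser K) (c : K).

(* The first N coefficients of a Cauchy product only depend on the first N
   coefficients of the factors, so they can be computed with polynomials. *)
Lemma coef_pmul_poly f g n N : (n < N)%N ->
  pmul f g n = ((\poly_(i < N) f i) * (\poly_(i < N) g i))`_n.
Proof.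
move=> nN; rewrite coefM /pmul; apply: eq_bigr => i _.
have hi := ltn_ord i; rewrite !coef_poly.
by rewrite ifT ?ifT //; apply: leq_ltn_trans nN; [exact: leq_subr | rewrite -ltnS].
Qed.

Lemma coefM_congr (p p' q q' : {poly K}) n :
  (forall i, (i <= n)%N -> p`_i = p'`_i) -> (forall i, (i <= n)%N -> q`_i = q'`_i) ->
  (p * q)`_n = (p' * q')`_n.
Proof.
move=> hp hq; rewrite !coefM; apply: eq_bigr => i _.
by rewrite hp ?hq ?leq_subr // -ltnS.
Qed.

Lemma pmulC f g : pmul f g = pmul g f.
Proof.
apply: functional_extensionality => n.
by rewrite !(@coef_pmul_poly _ _ n n.+1) // mulrC.
Qed.

Lemma pmulA f g h : pmul f (pmul g h) = pmul (pmul f g) h.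
Proof.
apply: functional_extensionality => n; rewrite !(@coef_pmul_poly _ _ n n.+1) //.
have trunc (u v : pser K) i : (i <= n)%N ->
    (\poly_(j < n.+1) pmul u v j)`_i = ((\poly_(j < n.+1) u j) * (\poly_(j < n.+1) v j))`_i.
  move=> hi; rewrite coef_poly ltnS hi /=.
  by apply: coef_pmul_poly; rewrite ltnS.
rewrite (coefM_congr (fun i _ => erefl) (trunc g h)) // mulrA.
by apply: coefM_congr => // i hi; rewrite trunc.
Qed.

Lemma pmulDl f g h : pmul (padd f g) h = padd (pmul f h) (pmul g h).
Proof.
apply: functional_extensionality => n.
by rewrite /pmul /padd -big_split; apply: eq_bigr => i _; rewrite mulrDl.
Qed.

Lemma pmulDr f g h : pmul h (padd f g) = padd (pmul h f) (pmul h g).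
Proof. by rewrite pmulC pmulDl !(pmulC h). Qed.

Lemma pmulZl c f g : pmul (pscale c f) g = pscale c (pmul f g).
Proof.
apply: functional_extensionality => n.
by rewrite /pmul /pscale mulr_sumr; apply: eq_bigr => i _; rewrite mulrA.
Qed.

Lemma pmulZr c f g : pmul g (pscale c f) = pscale c (pmul g f).
Proof. by rewrite pmulC pmulZl pmulC. Qed.

Lemma pmul1l f : pmul (pconst 1) f = f.
Proof.
apply: functional_extensionality => n.
rewrite /pmul big_ord_recl /= /pconst /= mul1r subn0 big1 ?addr0 // => i _.
by rewrite mul0r.
Qed.

Lemma pmul1r f : pmul f (pconst 1) = f.
Proof. by rewrite pmulC pmul1l. Qed.

Lemma pmul0l f : pmul (pzero K) f = pzero K.
Proof.
apply: functional_extensionality => n.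
by rewrite /pmul /pzero big1 // => i _; rewrite mul0r.
Qed.

Lemma pmul0r f : pmul f (pzero K) = pzero K.
Proof. by rewrite pmulC pmul0l. Qed.

Lemma pmul_coef0 f g : pmul f g 0%N = f 0%N * g 0%N.
Proof. by rewrite /pmul big_ord1. Qed.

Lemma unit_coef0 f g : pmul f g = pconst 1 -> g 0%N != 0.
Proof.
move=> /(congr1 (fun h => h 0%N)); rewrite pmul_coef0 /pconst /= => e.
by apply/eqP => g0; move: e; rewrite g0 mulr0 => /eqP; rewrite eq_sym oner_eq0.
Qed.

Lemma ptpowE k f n : pmul (ptpow K k) f n = if (k <= n)%N then f (n - k)%N else 0.
Proof.
rewrite /pmul /ptpow; case: leqP => hk.
  rewrite (bigD1 (Ordinal (leq_ltn_trans hk (ltnSn n)))) //= eqxx mul1r big1 ?addr0 //.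
  move=> i /eqP hi; rewrite ifF ?mul0r //; apply/negP => /eqP e; apply: hi.
  exact: val_inj.
rewrite big1 // => i _; rewrite ifF ?mul0r //; apply/negP => /eqP e.
by move: (ltn_ord i); rewrite e ltnS leqNgt hk.
Qed.

Lemma ptpow_inj k f g : pmul (ptpow K k) f = pmul (ptpow K k) g -> f = g.
Proof.
move=> e; apply: functional_extensionality => n.
by have := congr1 (fun u => u (n + k)%N) e; rewrite /= !ptpowE leq_addl addnK.
Qed.

Definition vanish f k := forall i, (i < k)%N -> f i = 0.

Lemma vanish_le f m n : vanish f n -> (m <= n)%N -> vanish f m.
Proof. by move=> h mn i hi; apply: h; apply: leq_trans mn. Qed.

Lemma pmul_vanish f g p q : vanish f p -> vanish g q -> vanish (pmul f g) (p + q).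
Proof.
move=> hf hg n hn; rewrite /pmul big1 // => i _.
have hi := ltn_ord i; case: (ltnP i p) => hip; first by rewrite hf ?mul0r.
by rewrite hg ?mulr0 //; lia.
Qed.

Lemma pmul_vanish_le f g p q n : vanish f p -> vanish g q -> (n <= p + q)%N ->
  vanish (pmul f g) n.
Proof. by move=> hf hg; apply: vanish_le; apply: pmul_vanish. Qed.

Lemma pmul_lead f g p q : vanish f p -> vanish g q -> pmul f g (p + q)%N = f p * g q.
Proof.
move=> hf hg; rewrite /pmul.
have hp : (p < (p + q).+1)%N by lia.
rewrite (bigD1 (Ordinal hp)) //= addKn big1 ?addr0 // => i /eqP hi.
have hi' := ltn_ord i; case: (ltngtP i p) => h.
- by rewrite hf ?mul0r.
- by rewrite hg ?mulr0 //; lia.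
- by exfalso; apply: hi; apply: val_inj.
Qed.

Lemma val_eq_mul f g p q : val_eq f p -> val_eq g q -> val_eq (pmul f g) (p + q).
Proof.
move=> [hf fp] [hg gq]; split; first exact: pmul_vanish.
by rewrite pmul_lead // mulf_neq0.
Qed.

Lemma val_eq_t f k : val_eq f k -> val_eq (pmul (pt K) f) k.+1.
Proof.
apply: (@val_eq_mul _ _ 1%N); split; first by case.
by rewrite /pt /ptpow oner_neq0.
Qed.

Lemma val_eq_1 : val_eq (pconst (1 : K)) 0.
Proof. by split; [case | rewrite /pconst oner_neq0]. Qed.

Lemma val_eq_quot f g h p q : pmul f g = h -> val_eq g q -> val_eq h (p + q) ->
  val_eq f p.
Proof.
move=> e [hg gq] [hh hpq].
have hf : vanish f p.
  elim: p hh {hpq} => [|p IH] hh; first by [].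
  have IH' := IH (vanish_le hh (leq_add (leqnSn p) (leqnn q))).
  move=> i; rewrite ltnS leq_eqVlt => /orP [/eqP ->|]; last exact: IH'.
  have := pmul_lead IH' hg; rewrite e hh ?ltn_add2r // => /esym /eqP.
  by rewrite mulf_eq0 (negbTE gq) orbF => /eqP.
by split=> //; apply: contraNneq hpq => fp0; rewrite -e pmul_lead // fp0 mul0r.
Qed.

Lemma pmul_cancel f f' g k : pmul f g = pmul f' g -> val_eq g k -> f = f'.
Proof.
move=> e [hg gk].
pose d := padd f (pscale (-1) f').
have hd : pmul d g = pzero K.
  rewrite /d pmulDl pmulZl e; apply: functional_extensionality => n.
  by rewrite /padd /pscale /pzero mulN1r addrN.
suff dvan : forall n, vanish d n.
  apply: functional_extensionality => n; have := dvan n.+1 n (ltnSn n).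
  by rewrite /d /padd /pscale mulN1r => /eqP; rewrite subr_eq0 => /eqP.
elim=> [|n IH] //; move=> i; rewrite ltnS leq_eqVlt => /orP [/eqP ->|]; last exact: IH.
have := pmul_lead IH hg; rewrite hd /pzero => /esym /eqP.
by rewrite mulf_eq0 (negbTE gk) orbF => /eqP.
Qed.

Definition eqm n f g := forall i, (i < n)%N -> f i = g i.

Lemma pmul_eqm n f f' g g' : eqm n f f' -> eqm n g g' -> eqm n (pmul f g) (pmul f' g').
Proof.
move=> hf hg i hi; rewrite /pmul; apply: eq_bigr => j _.
have hj := ltn_ord j; rewrite hf ?hg //; lia.
Qed.

Lemma span_plusE gens n f : span_plus gens n f <->
  exists cs : seq K, size cs = size gens /\ eqm n f (lincomb cs gens).
Proof.
split.
  case=> cs [hs [r ->]]; exists cs; split => // i hi.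
  by rewrite /padd ptpowE leqNgt hi addr0.
case=> cs [hs hf]; exists cs; split => //.
exists (fun k => f (k + n)%N - lincomb cs gens (k + n)%N).
apply: functional_extensionality => k; rewrite /padd ptpowE.
by case: leqP => h; [rewrite subnK // addrC subrK | rewrite hf // addr0].
Qed.

Lemma lincomb_nil : lincomb [::] [::] = pzero K.
Proof. by []. Qed.

Lemma lincomb_cons c cs g gens :
  lincomb (c :: cs) (g :: gens) = padd (pscale c g) (lincomb cs gens).
Proof. by []. Qed.

Lemma lincomb_vanish cs gens m :
  (forall i, (i < size gens)%N -> vanish (nth (pzero K) gens i) m) ->
  vanish (lincomb cs gens) m.
Proof.
elim: gens cs => [|g gens IH] [|c cs] hg i hi //.
have g0 : g i = 0 := hg 0%N isT i hi.
have rest0 : lincomb cs gens i = 0 := IH cs (fun j hj => hg j.+1 hj) i hi.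
by rewrite lincomb_cons /padd /pscale g0 rest0 mulr0 addr0.
Qed.

(* Series with pairwise distinct orders ks, all below n, are linearly
   independent modulo t^n: the coefficient of the series of least order is
   read off at that order, and the others are handled by induction. *)
Lemma lincomb_triangular n (cs : seq K) gens (ks : seq nat) :
  size cs = size gens -> size ks = size gens ->
  (forall i, (i < size gens)%N -> val_eq (nth (pzero K) gens i) (nth 0%N ks i)) ->
  sorted ltn ks -> all (fun k => k < n)%N ks ->
  vanish (lincomb cs gens) n -> cs = nseq (size cs) 0.
Proof.
elim: gens cs ks => [|g gens IH] [|c cs] [|k ks] //= [hcs] [hks] hval hsort /andP [kn ksn] hv.
have [hg gk] := hval 0%N isT.
have hrest : vanish (lincomb cs gens) k.+1.
  apply: lincomb_vanish => i hi; have [hgi _] := hval i.+1 hi.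
  apply: vanish_le hgi _; have := order_path_min ltn_trans hsort.
  by move=> /allP; apply; rewrite /= mem_nth // hks.
have c0 : c = 0.
  have := hv k kn; rewrite lincomb_cons /padd /pscale hrest // addr0 => /eqP.
  by rewrite mulf_eq0 (negbTE gk) orbF => /eqP.
rewrite c0; congr (_ :: _); apply: (IH _ ks) => //.
- by move=> i; apply: (hval i.+1).
- exact: path_sorted hsort.
- by move=> i hi; have := hv i hi; rewrite lincomb_cons /padd /pscale c0 mul0r add0r.
Qed.

Lemma module_map_is_mul (S F : pser K -> Prop) (phi : pser K -> pser K) N :
  (forall f, S (pmul (ptpow K N) f)) -> F (pconst 1) ->
  (forall s m, S s -> F m -> phi (pmul s m) = pmul s (phi m)) ->
  forall m, F m -> phi m = pmul m (phi (pconst 1)).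
Proof.
move=> hS h1 hphi m hm; apply: (@ptpow_inj N).
have e1 := hphi _ _ (hS m) h1; rewrite pmul1r in e1.
have e2 := hphi _ _ (hS (pconst 1)) hm; rewrite pmul1r in e2.
by rewrite -e2 e1 pmulA.
Qed.

End PowerSeries.

Section MonomialCurve.
Variable K : fieldType.
Variables x y z : pser K.
Hypotheses (hx : val_eq x 5) (hy : val_eq y 8).
Hypothesis ht : pmul y y = pmul (pt K) (pmul x (pmul x x)).
Hypothesis hz : pmul z x = y.

Let hx0 : vanish x 5 := hx.1.
Let hy0 : vanish y 8 := hy.1.

Lemma z_order : val_eq z 3.
Proof. exact: (@val_eq_quot _ z x y 3 5 hz hx hy). Qed.

Let hz0 : vanish z 3 := z_order.1.

(* z^2 = t x, obtained by cancelling x^2 in z^2 x^2 = y^2 = t x^3. *)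
Lemma z_sq : pmul z z = pmul (pt K) x.
Proof.
apply: (@pmul_cancel _ _ _ (pmul x x) 10 _ (val_eq_mul hx hx)).
have -> : pmul (pmul z z) (pmul x x) = pmul y y.
  by rewrite -hz -!pmulA; congr (pmul z _); rewrite pmulA [RHS]pmulC.
by rewrite ht pmulA.
Qed.

(* Since z^2 = t x and z^3 = t y, the generator z + a t z^2 + b z^3 of F_9 is
   z plus the tail a t^2 x + b t y, of order at least 7. *)
Definition wtail a b := padd (pscale a (pmul (pt K) (pmul (pt K) x))) (pscale b (pmul (pt K) y)).
Definition w a b := padd z (wtail a b).

Lemma generatorE a b :
  padd z (padd (pscale a (pmul (pt K) (pmul z z))) (pscale b (pmul z (pmul z z)))) = w a b.
Proof. by rewrite /w /wtail z_sq (pmulA z (pt K) x) (pmulC z (pt K)) -pmulA hz. Qed.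

Lemma wtail_vanish a b : vanish (wtail a b) 7.
Proof.
have t2x : vanish (pmul (pt K) (pmul (pt K) x)) 7 := (val_eq_t (val_eq_t hx)).1.
have ty : vanish (pmul (pt K) y) 7 := vanish_le (val_eq_t hy).1 (isT : (7 <= 9)%N).
by move=> i hi; rewrite /wtail /padd /pscale t2x // ty // !mulr0 addr0.
Qed.

Lemma w_vanish a b : vanish (w a b) 3.
Proof. by move=> i hi; rewrite /w /padd hz0 // wtail_vanish ?addr0 //; lia. Qed.

Lemma x_mul_w a b : eqm 10 (pmul x (w a b)) y.
Proof.
move=> i hi; rewrite /w pmulDr pmulC hz /padd.
by rewrite (pmul_vanish hx0 (wtail_vanish a b)) ?addr0 //; lia.
Qed.

Lemma w_mul_w a b a' b' : eqm 10 (pmul (w a b) (w a' b')) (pmul (pt K) x).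
Proof.
move=> i hi; rewrite /w pmulDl (pmulDr z (wtail a' b') z).
rewrite (pmulDr z (wtail a' b') (wtail a b)) /padd z_sq.
rewrite (pmul_vanish hz0 (wtail_vanish a' b')) ?(pmul_vanish (wtail_vanish a b) hz0)
  ?(pmul_vanish (wtail_vanish a b) (wtail_vanish a' b')) ?addr0 //; lia.
Qed.

Definition f9gens a b := [:: pconst 1; w a b; x; y].

Lemma F9E a b f : F9 x y z a b f <->
  exists c0 c1 c2 c3, eqm 10 f (lincomb [:: c0; c1; c2; c3] (f9gens a b)).
Proof.
rewrite /F9 generatorE span_plusE; split.
  case=> cs [hs h]; case: cs hs h => [|c0 [|c1 [|c2 [|c3 [|]]]]] // _ h.
  by exists c0, c1, c2, c3.
by case=> c0 [c1 [c2 [c3 h]]]; exists [:: c0; c1; c2; c3].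
Qed.

(* Modulo t^10 an element of S_2 is a combination of 1, x, y, since x^2 and
   t x^2 have order at least 10. *)
Lemma S2_low s : S2 x y s ->
  exists c0 c1 c2, eqm 10 s (lincomb [:: c0; c1; c2] [:: pconst 1; x; y]).
Proof.
rewrite /S2 span_plusE => -[cs [hs h]].
case: cs hs h => [|c0 [|c1 [|c2 [|c3 [|c4 [|]]]]]] // _ h.
exists c0, c1, c2 => i hi; rewrite h; last by lia.
have x2 := pmul_vanish_le (n := 10) hx0 hx0 (leqnn _) hi.
have tx2 := (val_eq_t (val_eq_mul hx hx)).1 i (ltnW hi).
by rewrite !lincomb_cons lincomb_nil /padd /pscale x2 tx2; ring.
Qed.

Lemma mul_f9comb a b c0 c1 c2 d0 d1 d2 d3 :
  eqm 10 (pmul (lincomb [:: c0; c1; c2] [:: pconst 1; x; y])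
               (lincomb [:: d0; d1; d2; d3] (f9gens a b)))
         (lincomb [:: c0 * d0; c0 * d1; c0 * d2 + c1 * d0; c0 * d3 + c1 * d1 + c2 * d0]
                  (f9gens a b)).
Proof.
move=> i hi; have xw := x_mul_w a b hi.
have xx := pmul_vanish_le (n := 10) hx0 hx0 (leqnn _) hi.
have xy := pmul_vanish_le (n := 10) hx0 hy0 isT hi.
have yx := pmul_vanish_le (n := 10) hy0 hx0 isT hi.
have yy := pmul_vanish_le (n := 10) hy0 hy0 isT hi.
have yw := pmul_vanish_le (n := 10) hy0 (w_vanish a b) isT hi.
(* w is generalized so that distributivity does not unfold it *)
rewrite /f9gens !lincomb_cons; move: (w a b) xw yw => wv xw yw.
rewrite lincomb_nil !(pmulDl, pmulDr, pmulZl, pmulZr, pmul1l, pmul1r, pmul0l, pmul0r).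
rewrite /padd /pscale /pzero /= xw xx xy yx yy yw; ring.
Qed.

Lemma F9_one a b : F9 x y z a b (pconst 1).
Proof.
apply/F9E; exists 1, 0, 0, 0 => i _.
rewrite !lincomb_cons lincomb_nil /padd /pscale /pzero; ring.
Qed.

Lemma F9_w a b : F9 x y z a b (w a b).
Proof.
apply/F9E; exists 0, 1, 0, 0 => i _.
rewrite /f9gens !lincomb_cons lincomb_nil /padd /pscale /pzero; ring.
Qed.

Lemma S2_t13 f : S2 x y (pmul (ptpow K 13) f).
Proof.
apply/span_plusE; exists (nseq 5 0); split=> // i hi.
by rewrite ptpowE leqNgt hi !lincomb_cons lincomb_nil /padd /pscale /pzero; ring.
Qed.

Lemma F9_submodule a b : is_submodule (S2 x y) (F9 x y z a b).
Proof.
split; [|split].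
- apply/F9E; exists 0, 0, 0, 0 => i _.
  rewrite !lincomb_cons lincomb_nil /padd /pscale /pzero; ring.
- move=> f g /F9E [d0 [d1 [d2 [d3 hf]]]] /F9E [e0 [e1 [e2 [e3 hg]]]].
  apply/F9E; exists (d0 + e0), (d1 + e1), (d2 + e2), (d3 + e3) => i hi.
  rewrite {1}/padd hf // hg // !lincomb_cons lincomb_nil /padd /pscale /pzero; ring.
- move=> s m /S2_low [c0 [c1 [c2 hs]]] /F9E [d0 [d1 [d2 [d3 hm]]]].
  apply/F9E; eexists _, _, _, _ => i hi.
  by rewrite (pmul_eqm hs hm) // mul_f9comb.
Qed.

Lemma w_mul_f9comb a b a' b' c0 c1 c2 c3 :
  eqm 10 (pmul (w a b) (lincomb [:: c0; c1; c2; c3] (f9gens a' b')))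
         (lincomb [:: c0; c1; c2] [:: w a b; pmul (pt K) x; y]).
Proof.
move=> i hi; have ww := w_mul_w a b a' b' hi.
have wx : pmul (w a b) x i = y i by rewrite pmulC x_mul_w.
have wy := pmul_vanish_le (n := 10) (w_vanish a b) hy0 isT hi.
(* the generators are generalized so that distributivity does not unfold them *)
rewrite /f9gens !lincomb_cons lincomb_nil; move: (w a b) (w a' b') ww wx wy => wv wv' ww wx wy.
rewrite !(pmulDr, pmulZr) pmul1r pmul0r /padd /pscale /pzero /= ww wx wy; ring.
Qed.

(* The key rigidity: modulo t^10 the series 1, z, x, t x, t^2 x, y, t y have
   the distinct orders 0, 3, 5, 6, 7, 8, 9, so a relation
   c0 w(a,b) + c1 t x + c2 y = d0 + d1 w(a',b') + d2 x + d3 y with c0 != 0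
   forces d1 = c0, then a = a' and b = b'. *)
Lemma f9_rigid (a b a' b' c0 c1 c2 d0 d1 d2 d3 : K) : c0 != 0 ->
  eqm 10 (lincomb [:: c0; c1; c2] [:: w a b; pmul (pt K) x; y])
         (lincomb [:: d0; d1; d2; d3] (f9gens a' b')) ->
  (a, b) = (a', b').
Proof.
move=> c0n e.
pose gens := [:: pconst 1; z; x; pmul (pt K) x; pmul (pt K) (pmul (pt K) x); y; pmul (pt K) y].
pose cs := [:: - d0; c0 - d1; - d2; c1; c0 * a - d1 * a'; c2 - d3; c0 * b - d1 * b'].
have hv : vanish (lincomb cs gens) 10.
  move=> i /e; rewrite /cs /gens /f9gens /w /wtail !lincomb_cons !lincomb_nil /padd /pscale /pzero.
  by move=> /eqP; rewrite -subr_eq0 => /eqP ei; rewrite -[RHS]ei; ring.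
have orders i : (i < size gens)%N -> val_eq (nth (pzero K) gens i) (nth 0%N [:: 0; 3; 5; 6; 7; 8; 9] i).
  case: i => [|[|[|[|[|[|[|i]]]]]]] //= _.
  - exact: val_eq_1.
  - exact: z_order.
  - exact: val_eq_t.
  - exact: (val_eq_t (val_eq_t hx)).
  - exact: val_eq_t.
have := @lincomb_triangular _ 10 cs gens [:: 0; 3; 5; 6; 7; 8; 9] erefl erefl orders isT isT hv.
rewrite /cs /= => -[_ /eqP]; rewrite subr_eq0 => /eqP d1E _ _; rewrite -d1E => ha _ hb.
by congr (_, _); apply: (mulfI c0n); apply/eqP; rewrite -subr_eq0; apply/eqP.
Qed.

(* An S_2-isomorphism F_9(a,b) -> F_9(a',b') is multiplication by a unit u,
   and w(a,b) u in F_9(a',b') gives a relation to which f9_rigid applies. *)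
Lemma F9_iso_rigid a b a' b' :
  module_iso (S2 x y) (F9 x y z a b) (F9 x y z a' b') -> (a, b) = (a', b').
Proof.
case=> phi [phiF [_ [phiS [_ phi_onto]]]].
have phiE := module_map_is_mul S2_t13 (F9_one a b) phiS.
have u0 : phi (pconst 1) 0%N != 0.
  have [m [hm]] := phi_onto _ (F9_one a' b').
  by rewrite phiE //; apply: unit_coef0.
have /F9E [c0 [c1 [c2 [c3 hu]]]] := phiF _ (F9_one a b).
have c0n : c0 != 0.
  move: u0; rewrite hu // /f9gens !lincomb_cons lincomb_nil /padd /pscale /pzero.
  by rewrite w_vanish ?hx0 ?hy0 // /pconst /= !mulr0 !addr0 mulr1.
have /F9E [d0 [d1 [d2 [d3 hwu]]]] : F9 x y z a' b' (pmul (w a b) (phi (pconst 1))).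
  by rewrite -(phiE _ (F9_w a b)); apply: phiF; apply: F9_w.
have rel : eqm 10 (lincomb [:: c0; c1; c2] [:: w a b; pmul (pt K) x; y])
                  (lincomb [:: d0; d1; d2; d3] (f9gens a' b')).
  move=> i hi; rewrite -(w_mul_f9comb a b a' b' c0 c1 c2 c3) // -hwu //.
  by apply: (pmul_eqm (fun j _ => erefl) _ hi) => j hj; rewrite hu.
exact: f9_rigid c0n rel.
Qed.
End MonomialCurve.

Theorem mainTheorem2 (K : closedFieldType) (x y z : pser K)
  (hx : val_eq x 5) (hy : val_eq y 8)
  (ht : pmul y y = pmul (pt K) (pmul x (pmul x x)))   (* t = y^2 / x^3 *)
  (hz : pmul z x = y) :                                (* z = y / x *)
  (forall a b : K, a != 0 -> is_submodule (S2 x y) (F9 x y z a b)) /\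
  (forall a b a' b' : K, a != 0 -> a' != 0 ->
     module_iso (S2 x y) (F9 x y z a b) (F9 x y z a' b') ->
     (a, b) = (a', b')).
Proof.
split=> [a b _ | a b a' b' _ _].
- exact: F9_submodule.
- exact: F9_iso_rigid.
Qed.
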